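(* Let $w\ge 2$, $h\ge 3$ and $G=P_w(U)\sqcap C_h$ with $U=\{i,j\}$ for distinct $i,j\in\{1,\dots,w\}$. Then $Z(G)\le h$.
   Context: All graphs are finite, simple and undirected. Zero forcing: given a graph $G$ and a set $S\subseteq V(G)$ of initially filled vertices, the color change rule says that if a filled vertex $v$ has exactly one unfilled neighbor $u$, then $v$ forces $u$ to become filled. $S$ is a zero forcing set if repeatedly applying this rule eventually fills every vertex of $G$. The zero forcing number $Z(G)$ is the minimum cardinality of a zero forcing set of $G$. The path $P_n$ has vertex set $\{1,\dots,n\}$ and edges $\{k,k+1\}$ for $1\le k\le n-1$; the cycle $C_n$ ($n\ge3$) has vertex set $\{1,\dots,n\}$ and edges $\{k,k+1\}$ for $1\le k\le n-1$ together with $\{n,1\}$. Generalized hierarchical product: for graphs $W,H$ and $U\subseteq V(W)$ (the root set), $W(U)\sqcap H$ is the graph with vertex set $V(W)\times V(H)$ in which $(x_1,y_1)$ and $(x_2,y_2)$ are adjacent iff either ($x_1=x_2\in U$ and $y_1y_2\in E(H)$) or ($y_1=y_2$ and $x_1x_2\in E(W)$). *)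

From mathcomp Require Import all_boot.
From mathcomp Require Import boolp.
Set Implicit Arguments. Unset Strict Implicit. Unset Printing Implicit Defensive.

(* A graph is given by an adjacency relation on a finite vertex type
   (for the graphs below it is symmetric and irreflexive). *)

Definition force_step (T : finType) (adj : rel T) (S S' : {set T}) : Prop :=
  exists v u, [/\ v \in S, adj v u, u \notin S,
    (forall x, adj v x -> x \notin S -> x = u) & S' = u |: S].

Inductive forces_to (T : finType) (adj : rel T) : {set T} -> {set T} -> Prop :=
| forces_refl S : forces_to adj S S
| forces_step S S' S'' : force_step adj S S' -> forces_to adj S' S'' -> forces_to adj S S''.

Definition zero_forcing_set (T : finType) (adj : rel T) (S : {set T}) : Prop :=
  forces_to adj S setT.

Lemma zero_forcing_setT (T : finType) (adj : rel T) : zero_forcing_set adj setT.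
Proof. exact: forces_refl. Qed.

Lemma exists_zfs_size (T : finType) (adj : rel T) :
  exists n, `[< exists S : {set T}, zero_forcing_set adj S /\ #|S| = n >].
Proof. by exists #|[set: T]|; apply/asboolP; exists setT; split=> //; exact: zero_forcing_setT. Qed.

Definition zero_forcing_number (T : finType) (adj : rel T) : nat :=
  ex_minn (exists_zfs_size adj).

(* Path P_w on 'I_w (vertex k+1 of the paper is k here): edges {k, k+1}. *)
Definition path_adj (w : nat) : rel 'I_w :=
  fun a b => (a.+1 == b :> nat) || (b.+1 == a :> nat).

Definition cycle_adj (h : nat) : rel 'I_h :=
  fun a b => (a.+1 %% h == b :> nat) || (b.+1 %% h == a :> nat).

Definition hprod_adj (V1 V2 : finType) (adjW : rel V1) (U : {set V1})
  (adjH : rel V2) : rel (V1 * V2) :=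
  fun p q => ((p.1 == q.1) && (p.1 \in U) && adjH p.2 q.2)
          || ((p.2 == q.2) && adjW p.1 q.1).

From mathcomp Require Import all_boot.
From mathcomp Require Import boolp.
Set Implicit Arguments. Unset Strict Implicit. Unset Printing Implicit Defensive.

(* The first column {1} x V(H) is a zero forcing set of P_w(U) ⊓ H for every
   root set U and every graph H: once the columns left of column k are filled,
   each vertex (k-1, y) has (k, y) as its only possibly unfilled neighbour, so
   column k fills one vertex at a time. *)

Lemma forces_to_trans (T : finType) (adj : rel T) (A B C : {set T}) :
  forces_to adj A B -> forces_to adj B C -> forces_to adj A C.
Proof. by elim=> [//|X Y Z XY _ IH] /IH; apply: forces_step. Qed.

Lemma zero_forcing_number_le (T : finType) (adj : rel T) (S : {set T}) :
  zero_forcing_set adj S -> zero_forcing_number adj <= #|S|.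
Proof.
move=> zfsS; rewrite /zero_forcing_number; case: ex_minnP => n _ min_n.
by apply: min_n; apply/asboolP; exists S.
Qed.

Section PathHierarchicalProduct.
Variables (w : nat) (U : {set 'I_w}) (V : finType) (adjH : rel V).
Let adj := hprod_adj (@path_adj w) U adjH.

Definition colset (k : nat) (B : {set V}) : {set 'I_w * V} :=
  [set p : 'I_w * V | (p.1 < k) || (p.1 == k :> nat) && (p.2 \in B)].

Lemma colsetT_next k : colset k setT = colset k.+1 set0.
Proof.
by apply/setP=> -[a b]; rewrite !inE /= andbT andbF orbF ltnS (leq_eqVlt a) orbC.
Qed.

Lemma colset_w0 : colset w set0 = setT.
Proof. by apply/setP=> -[a b]; rewrite !inE /= ltn_ord. Qed.

Lemma force_step_colset k (B : {set V}) y : 0 < k < w -> y \notin B ->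
  force_step adj (colset k B) (colset k (y |: B)).
Proof.
case/andP=> k_gt0 k_lt_w yNB; have k1_lt_w : k.-1 < w by rewrite prednK // ltnW.
exists (Ordinal k1_lt_w, y), (Ordinal k_lt_w, y); split.
- by rewrite inE /= ltn_predL k_gt0.
- by rewrite /adj /hprod_adj /path_adj /= eqxx prednK // eqxx orbT.
- by rewrite inE /= ltnn eqxx (negbTE yNB).
- case=> a b; rewrite /adj /hprod_adj /path_adj inE /=.
  case/orP=> [/andP[/andP[/eqP <- _] _]|/andP[/eqP <- /orP[/eqP a_k|/eqP a_k]]].
  + by rewrite /= ltn_predL k_gt0.
  + by move=> _; congr pair; apply: val_inj; rewrite /= -a_k prednK.
  + by rewrite (@leq_trans k.-1) ?a_k ?leq_pred.
- apply/setP=> -[a b]; rewrite !inE /= andb_orr orbA xpair_eqE -(val_eqE a) /=.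
  by case: (a < k); rewrite ?orbT.
Qed.

Lemma forces_colset_column k (B : {set V}) : 0 < k < w ->
  forces_to adj (colset k B) (colset k setT).
Proof.
move=> k_bounds; move: {2}#|~: B| (erefl #|~: B|) => n.
elim: n B => [|n IH] B cardB.
  move/eqP: cardB; rewrite cards_eq0 -setCT (inj_eq (can_inj setCK)) => /eqP->.
  exact: forces_refl.
have [y yNB] : exists y, y \in ~: B by apply/set0Pn; rewrite -card_gt0 cardB.
rewrite inE in yNB; apply: forces_step (force_step_colset k_bounds yNB) (IH _ _).
move: cardB; rewrite (cardsD1 y) !inE yNB add1n => -[<-].
by rewrite setCU setIC -setDE.
Qed.

Lemma forces_colset_to_setT k : 0 < k <= w -> forces_to adj (colset k set0) setT.
Proof.
move=> /andP[k_gt0]; move: {2}(w - k) (erefl (w - k)) => d.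
elim: d k k_gt0 => [|d IH] k k_gt0 wk.
  move/eqP: wk; rewrite subn_eq0 => w_le_k k_le_w.
  have -> : k = w by apply/eqP; rewrite eqn_leq k_le_w.
  by rewrite colset_w0; apply: forces_refl.
move=> k_le_w; have k_lt_w : k < w by rewrite -subn_gt0 wk.
apply: forces_to_trans (forces_colset_column _ _) _; first by rewrite k_gt0.
by rewrite colsetT_next; apply: IH => //; rewrite subnS wk.
Qed.

Lemma zero_forcing_first_column : 0 < w -> zero_forcing_set adj (colset 0 setT).
Proof. by move=> w_gt0; rewrite /zero_forcing_set colsetT_next; apply: forces_colset_to_setT. Qed.

Lemma card_first_column : 0 < w -> #|colset 0 setT| = #|V|.
Proof.
move=> w_gt0; pose x0 := Ordinal w_gt0.
have pair_x0_inj : injective (@pair _ V x0) by move=> y1 y2 [].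
rewrite -[RHS]cardsT -(card_imset _ pair_x0_inj); apply: eq_card => -[a b].
rewrite !inE /= andbT.
apply/idP/imsetP=> [/eqP a0|[y _ [-> _]] //].
by exists b => //; congr pair; apply: val_inj.
Qed.

End PathHierarchicalProduct.

Theorem mainTheorem9 (w h : nat) (i j : 'I_w) :
  2 <= w -> 3 <= h -> i != j ->
  zero_forcing_number (hprod_adj (@path_adj w) [set i; j] (@cycle_adj h)) <= h.
Proof.
move=> w_ge2 _ _; have w_gt0 : 0 < w by apply: leq_trans w_ge2.
have zfs := zero_forcing_first_column [set i; j] (@cycle_adj h) w_gt0.
apply: leq_trans (zero_forcing_number_le zfs) _.
by rewrite card_first_column ?card_ord.
Qed.
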